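(* For $0<c<1$ and curves $\gamma(r)$, $\tilde\gamma(s)$ in $\mathbb{H}^2$ parametrized by arc length with unit normal fields $N(r)$, $\tilde N(s)$ and curvatures $\kappa(r)$, $\tilde\kappa(s)$ (so $\gamma''=\gamma+\kappa N$, $N'=-\kappa\gamma'$, and similarly for $\tilde\gamma$), let $M^c_{\kappa,\tilde\kappa}$ be the hypersurface of $\mathbb{H}^2\times\mathbb{H}^2$ given by the immersion $(t,r,s)\mapsto\big(\cosh(\sqrt c\,t)\gamma(r)+\sinh(\sqrt c\,t)N(r),\ \cosh(\sqrt{1-c}\,t)\tilde\gamma(s)+\sinh(\sqrt{1-c}\,t)\tilde N(s)\big)$, and let $M$ be an open part of $M^c_{\kappa,\tilde\kappa}$. Then: (1) $M$ is minimal if and only if $c=\tfrac12$ and $\kappa(r)$ and $\tilde\kappa(s)$ are equal to the same constant; (2) $M$ has constant sectional curvature if and only if $c=\tfrac12$ and $\kappa$, $\tilde\kappa$ are constants satisfying $\kappa\tilde\kappa=1$; moreover, in that case the sectional curvature of $M$ equals $-\tfrac12$.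
   Context: $\mathbb{R}^3_1$ denotes $\mathbb{R}^3$ with the Lorentzian inner product $\langle x,y\rangle=-x_1y_1+x_2y_2+x_3y_3$, $\mathbb{H}^2=\{x\in\mathbb{R}^3_1:\langle x,x\rangle=-1,\ x_1>0\}$, and $\mathbb{H}^2\times\mathbb{H}^2\subset\mathbb{R}^3_1\times\mathbb{R}^3_1$ carries the Riemannian product metric; $M$ carries the induced metric. *)

From Stdlib Require Import Reals.
From Coquelicot Require Import Coquelicot.
Open Scope R_scope.

Definition V3 := (R * R * R)%type.
Definition V6 := (V3 * V3)%type.

Definition x1 (x : V3) : R := fst (fst x).
Definition x2 (x : V3) : R := snd (fst x).
Definition x3 (x : V3) : R := snd x.

Definition lor (x y : V3) : R := - x1 x * x1 y + x2 x * x2 y + x3 x * x3 y.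

(* Product metric on R^3_1 x R^3_1 (restricts to the Riemannian product
   metric of H^2 x H^2) *)
Definition ip6 (p q : V6) : R := lor (fst p) (fst q) + lor (snd p) (snd q).

Definition vadd (x y : V3) : V3 := (x1 x + x1 y, x2 x + x2 y, x3 x + x3 y).
Definition vscal (a : R) (x : V3) : V3 := (a * x1 x, a * x2 x, a * x3 x).

Definition in_H2 (x : V3) : Prop := lor x x = -1 /\ 0 < x1 x.

Definition dV (f : R -> V3) (r : R) : V3 :=
  (Derive (fun u => x1 (f u)) r, Derive (fun u => x2 (f u)) r,
   Derive (fun u => x3 (f u)) r).

Definition smooth_on (I : R -> Prop) (f : R -> R) : Prop :=
  forall r, I r -> forall n, ex_derive_n f n r.

Definition smoothV_on (I : R -> Prop) (f : R -> V3) : Prop :=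
  smooth_on I (fun u => x1 (f u)) /\ smooth_on I (fun u => x2 (f u)) /\
  smooth_on I (fun u => x3 (f u)).

Definition frenet_curve (I : R -> Prop) (gam N : R -> V3) (k : R -> R) : Prop :=
  open I /\ smoothV_on I gam /\ smoothV_on I N /\ smooth_on I k /\
  forall r, I r ->
    in_H2 (gam r) /\
    lor (dV gam r) (dV gam r) = 1 /\
    lor (N r) (N r) = 1 /\ lor (N r) (gam r) = 0 /\ lor (N r) (dV gam r) = 0 /\
    dV (dV gam) r = vadd (gam r) (vscal (k r) (N r)) /\
    dV N r = vscal (- k r) (dV gam r).

Definition coord (x : V3) (i : nat) : R :=
  match i with O => x1 x | 1%nat => x2 x | _ => x3 x end.

Definition upd (x : V3) (i : nat) (u : R) : V3 :=
  match i with
  | O => (u, x2 x, x3 x)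
  | 1%nat => (x1 x, u, x3 x)
  | _ => (x1 x, x2 x, u)
  end.

Definition connected3 (U : V3 -> Prop) : Prop :=
  forall A B : V3 -> Prop, open A -> open B ->
    (forall x, U x -> A x \/ B x) ->
    (forall x, U x -> A x -> B x -> False) ->
    (exists x, U x /\ A x) -> (exists x, U x /\ B x) -> False.

Definition Mc (c : R) (gam N gam2 N2 : R -> V3) (x : V3) : V6 :=
  let t := coord x 0 in let r := coord x 1 in let s := coord x 2 in
  (vadd (vscal (cosh (sqrt c * t)) (gam r)) (vscal (sinh (sqrt c * t)) (N r)),
   vadd (vscal (cosh (sqrt (1 - c) * t)) (gam2 s))
        (vscal (sinh (sqrt (1 - c) * t)) (N2 s))).

Definition dP (f : R -> V6) (u : R) : V6 :=
  (dV (fun v => fst (f v)) u, dV (fun v => snd (f v)) u).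

Definition pF (i : nat) (F : V3 -> V6) (x : V3) : V6 :=
  dP (fun u => F (upd x i u)) (coord x i).

Definition pd (i : nat) (f : V3 -> R) (x : V3) : R :=
  Derive (fun u => f (upd x i u)) (coord x i).

Definition sum3 (f : nat -> R) : R := f 0%nat + f 1%nat + f 2%nat.

Definition gm (F : V3 -> V6) (i j : nat) (x : V3) : R :=
  ip6 (pF i F x) (pF j F x).

Definition cof (F : V3 -> V6) (i j : nat) (x : V3) : R :=
  let i1 := ((i + 1) mod 3)%nat in let i2 := ((i + 2) mod 3)%nat in
  let j1 := ((j + 1) mod 3)%nat in let j2 := ((j + 2) mod 3)%nat in
  gm F i1 j1 x * gm F i2 j2 x - gm F i1 j2 x * gm F i2 j1 x.

Definition detg (F : V3 -> V6) (x : V3) : R :=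
  sum3 (fun j => gm F 0 j x * cof F 0 j x).

Definition ginv (F : V3 -> V6) (i j : nat) (x : V3) : R :=
  cof F j i x / detg F x.

(* xi is a unit normal of F at x: tangent to H^2 x H^2 at F x, unit,
   orthogonal to the tangent space of M *)
Definition unit_normal (F : V3 -> V6) (x : V3) (xi : V6) : Prop :=
  ip6 xi xi = 1 /\ lor (fst xi) (fst (F x)) = 0 /\ lor (snd xi) (snd (F x)) = 0 /\
  forall i, (i < 3)%nat -> ip6 xi (pF i F x) = 0.

(* second fundamental form h_ij w.r.t. xi (the Levi-Civita connection of
   H^2 x H^2 differs from the flat derivative of R^6 by a combination of
   (F1,0),(0,F2), which is orthogonal to xi) *)
Definition sff (F : V3 -> V6) (xi : V6) (i j : nat) (x : V3) : R :=
  ip6 (pF i (pF j F) x) xi.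

Definition mean_curv (F : V3 -> V6) (xi : V6) (x : V3) : R :=
  sum3 (fun i => sum3 (fun j => ginv F i j x * sff F xi i j x)).

Definition minimal_on (F : V3 -> V6) (U : V3 -> Prop) : Prop :=
  forall x, U x -> forall xi, unit_normal F x xi -> mean_curv F xi x = 0.

Definition Gam1 (F : V3 -> V6) (p k l : nat) (x : V3) : R :=
  / 2 * (pd k (gm F p l) x + pd l (gm F p k) x - pd p (gm F k l) x).

(* Riemann tensor R_{iklm} of the induced metric (Landau-Lifshitz convention,
   R_{1212} = K det g for a surface of Gauss curvature K) *)
Definition Riem (F : V3 -> V6) (i k l m : nat) (x : V3) : R :=
  / 2 * (pd k (pd l (gm F i m)) x + pd i (pd m (gm F k l)) x
         - pd k (pd m (gm F i l)) x - pd i (pd l (gm F k m)) x)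
  + sum3 (fun p => sum3 (fun q => ginv F p q x *
        (Gam1 F p k l x * Gam1 F q i m x - Gam1 F p k m x * Gam1 F q i l x))).

Definition gX (F : V3 -> V6) (x : V3) (X Y : nat -> R) : R :=
  sum3 (fun i => sum3 (fun j => gm F i j x * X i * Y j)).

Definition sec (F : V3 -> V6) (x : V3) (X Y : nat -> R) : R :=
  sum3 (fun i => sum3 (fun k => sum3 (fun l => sum3 (fun m =>
    Riem F i k l m x * X i * Y k * X l * Y m))))
  / (gX F x X X * gX F x Y Y - gX F x X Y ^ 2).

Definition has_sec_curv (F : V3 -> V6) (U : V3 -> Prop) (K0 : R) : Prop :=
  forall x, U x -> forall X Y : nat -> R,
    gX F x X X * gX F x Y Y - gX F x X Y ^ 2 <> 0 -> sec F x X Y = K0.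

Definition const_sec (F : V3 -> V6) (U : V3 -> Prop) : Prop :=
  exists K0, has_sec_curv F U K0.

(* Along the t-lines the immersion moves gam(r) and gam2(s) along their normal geodesics
   with speeds a = sqrt c and b = sqrt (1 - c), so the induced metric is
   dt^2 + A^2 dr^2 + B^2 ds^2 with A = cosh(a t) - k sinh(a t), B = cosh(b t) - k2 sinh(b t).
   For the unit normal (b T_a, -a T_b), with T_a = sinh(a t) gam + cosh(a t) N the unit
   tangent of the normal geodesic, the mean curvature is b f_a - a f_b, where
   f_a = (k cosh(a t) - sinh(a t)) / A is the curvature of the parallel curve and satisfies the
   Riccati equation df_a/dt = a (f_a^2 - 1). Differentiating b f_a = a f_b in t gives
   f_a^2 = f_b^2, which forces a = b, i.e. c = 1/2, and then k = k2 because f is injective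
   in the curvature.
   The coordinate planes have sectional curvatures -c, -(1 - c) and -A_t B_t / (A B), so
   constant curvature forces c = 1/2 and, by A_t B_t - a^2 A B = a^2 (k k2 - 1), k k2 = 1;
   conversely, for such constant curvatures the metric depends on t alone and its curvature
   tensor is that of constant curvature -1/2.
   In both cases k(r) is a function of s on the connected open set U, hence constant. *)

From Stdlib Require Import Reals Lra Lia.
From Coquelicot Require Import Coquelicot.
Open Scope R_scope.

Lemma cosh_sq_sub_sinh_sq x : cosh x * cosh x - sinh x * sinh x = 1.
Proof.
  unfold cosh, sinh.
  assert (H : exp x * exp (- x) = 1) by (rewrite <- exp_plus, Rplus_opp_r; apply exp_0).
  field_simplify. rewrite <- H. field.
Qed.

Lemma cosh_sq x : cosh x ^ 2 = 1 + sinh x ^ 2.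
Proof. pose proof (cosh_sq_sub_sinh_sq x). nra. Qed.

Lemma is_derive_cosh_scal (a t : R) :
  is_derive (fun u => cosh (a * u)) t (a * sinh (a * t)).
Proof.
  apply (is_derive_comp cosh (fun u => a * u) t (sinh (a * t)) a).
  - apply is_derive_Reals, derivable_pt_lim_cosh.
  - auto_derive; auto; ring.
Qed.

Lemma is_derive_sinh_scal (a t : R) :
  is_derive (fun u => sinh (a * u)) t (a * cosh (a * t)).
Proof.
  apply (is_derive_comp sinh (fun u => a * u) t (cosh (a * t)) a).
  - apply is_derive_Reals, derivable_pt_lim_sinh.
  - auto_derive; auto; ring.
Qed.

(* [is_derive_ext] stated over [R] itself rather than [R_AbsRing], so that [ring]
   recognises the side condition *)
Lemma is_derive_ext_R (f g : R -> R) x l :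
  (forall u, f u = g u) -> is_derive f x l -> is_derive g x l.
Proof. apply is_derive_ext. Qed.

Lemma Derive_loc_const (f : R -> R) x c0 :
  locally x (fun u => f u = c0) -> Derive f x = 0.
Proof. intros H. rewrite (Derive_ext_loc f (fun _ => c0) x H). apply Derive_const. Qed.

(* a statement about all three coordinates of a [V3] is proved once, for an arbitrary
   coordinate projection [p] *)
Definition is_proj (p : V3 -> R) : Prop := p = x1 \/ p = x2 \/ p = x3.

Lemma proj_vadd p u v : is_proj p -> p (vadd u v) = p u + p v.
Proof. intros [->|[->| ->]]; reflexivity. Qed.

Lemma proj_vscal p a u : is_proj p -> p (vscal a u) = a * p u.
Proof. intros [->|[->| ->]]; reflexivity. Qed.

Lemma proj_dV p f r : is_proj p -> p (dV f r) = Derive (fun u => p (f u)) r.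
Proof. intros [->|[->| ->]]; reflexivity. Qed.

Lemma V3_eq_proj (u v : V3) : (forall p, is_proj p -> p u = p v) -> u = v.
Proof.
  destruct u as [[u1 u2] u3], v as [[v1 v2] v3]; intros H.
  specialize (H x1 (or_introl eq_refl)) as E1.
  specialize (H x2 (or_intror (or_introl eq_refl))) as E2.
  specialize (H x3 (or_intror (or_intror eq_refl))) as E3.
  cbv [x1 x2 x3 fst snd] in E1, E2, E3; subst; reflexivity.
Qed.

Lemma smoothV_proj I f p : smoothV_on I f -> is_proj p -> smooth_on I (fun u => p (f u)).
Proof. intros (H1 & H2 & H3) [->|[->| ->]]; assumption. Qed.

Definition v0 : V3 := (0, 0, 0).

Lemma lor_sym x y : lor x y = lor y x.
Proof. unfold lor; ring. Qed.
Lemma lor_vaddl x y z : lor (vadd x y) z = lor x z + lor y z.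
Proof. unfold lor, vadd, x1, x2, x3; simpl; ring. Qed.
Lemma lor_vaddr x y z : lor z (vadd x y) = lor z x + lor z y.
Proof. unfold lor, vadd, x1, x2, x3; simpl; ring. Qed.
Lemma lor_vscall a x z : lor (vscal a x) z = a * lor x z.
Proof. unfold lor, vscal, x1, x2, x3; simpl; ring. Qed.
Lemma lor_vscalr a x z : lor z (vscal a x) = a * lor z x.
Proof. unfold lor, vscal, x1, x2, x3; simpl; ring. Qed.
Lemma lor_0l z : lor v0 z = 0.
Proof. unfold lor, v0, x1, x2, x3; simpl; ring. Qed.
Lemma lor_0r z : lor z v0 = 0.
Proof. unfold lor, v0, x1, x2, x3; simpl; ring. Qed.

#[local] Hint Rewrite lor_vaddl lor_vaddr lor_vscall lor_vscalr lor_0l lor_0r : lor.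

Definition is_deriveV (f : R -> V3) (t : R) (L : V3) : Prop :=
  forall p, is_proj p -> is_derive (fun u => p (f u)) t (p L).

Lemma is_deriveV_dV f t L : is_deriveV f t L -> dV f t = L.
Proof.
  intros H. apply V3_eq_proj. intros p Hp. rewrite proj_dV by exact Hp.
  exact (is_derive_unique _ _ _ (H p Hp)).
Qed.

Lemma is_deriveV_vscal f t L a :
  is_deriveV f t L -> is_deriveV (fun u => vscal a (f u)) t (vscal a L).
Proof.
  intros H p Hp. rewrite proj_vscal by exact Hp.
  apply (is_derive_ext_R (fun u => a * p (f u))); [intros u; rewrite proj_vscal; auto|].
  apply is_derive_scal, H, Hp.
Qed.

Lemma is_derive_lor (f g : R -> V3) r Lf Lg :
  is_deriveV f r Lf -> is_deriveV g r Lg ->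
  is_derive (fun u => lor (f u) (g u)) r (lor Lf (g r) + lor (f r) Lg).
Proof.
  intros Hf Hg.
  assert (P1 : is_proj x1) by (left; reflexivity).
  assert (P2 : is_proj x2) by (right; left; reflexivity).
  assert (P3 : is_proj x3) by (right; right; reflexivity).
  replace (lor Lf (g r) + lor (f r) Lg) with ((- (x1 Lf * x1 (g r) + x1 (f r) * x1 Lg)) +
    (x2 Lf * x2 (g r) + x2 (f r) * x2 Lg) + (x3 Lf * x3 (g r) + x3 (f r) * x3 Lg))
    by (unfold lor; ring).
  apply (is_derive_ext_R
           (fun u => - (x1 (f u) * x1 (g u)) + x2 (f u) * x2 (g u) + x3 (f u) * x3 (g u)));
    [intros t; unfold lor; ring|].
  assert (Hm : forall p, is_proj p -> is_derive (fun u => p (f u) * p (g u)) r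
                 (p Lf * p (g r) + p (f r) * p Lg)).
  { intros p Hp. apply (is_derive_mult (fun u => p (f u)) (fun u => p (g u)));
      [apply Hf, Hp | apply Hg, Hp | exact Rmult_comm]. }
  apply @is_derive_plus; [apply @is_derive_plus; [apply @is_derive_opp|]|]; auto.
Qed.

Lemma dV_ext_loc (f g : R -> V3) r : locally r (fun u => f u = g u) -> dV f r = dV g r.
Proof.
  intros [eps He]. unfold dV. f_equal; [f_equal|]; apply Derive_ext_loc;
    exists eps; intros y Hy; rewrite (He y Hy); reflexivity.
Qed.

Lemma dP_ext_loc (f g : R -> V6) r : locally r (fun u => f u = g u) -> dP f r = dP g r.
Proof.
  intros [eps He]. unfold dP. f_equal; apply dV_ext_loc;
    exists eps; intros y Hy; rewrite (He y Hy); reflexivity.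
Qed.

Lemma dV_const (L : V3) t : dV (fun _ => L) t = v0.
Proof. unfold dV, v0. rewrite !Derive_const. reflexivity. Qed.

Definition warp (a t kk : R) : R := cosh (a * t) - kk * sinh (a * t).
Definition warp_dt (a t kk : R) : R := a * (sinh (a * t) - kk * cosh (a * t)).

Definition geod (a t : R) (g n : V3) : V3 :=
  vadd (vscal (cosh (a * t)) g) (vscal (sinh (a * t)) n).
Definition geod_tan (a t : R) (g n : V3) : V3 :=
  vadd (vscal (sinh (a * t)) g) (vscal (cosh (a * t)) n).

Lemma is_derive_warp_t a t kk : is_derive (fun u => warp a u kk) t (warp_dt a t kk).
Proof.
  unfold warp, warp_dt.
  replace (a * (sinh (a * t) - kk * cosh (a * t)))
    with (a * sinh (a * t) - kk * (a * cosh (a * t))) by ring.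
  apply @is_derive_minus; [apply is_derive_cosh_scal | apply is_derive_scal, is_derive_sinh_scal].
Qed.

Lemma is_derive_warp_dt_t a t kk :
  is_derive (fun u => warp_dt a u kk) t (a * a * warp a t kk).
Proof.
  unfold warp, warp_dt.
  replace (a * a * (cosh (a * t) - kk * sinh (a * t)))
    with (a * (a * cosh (a * t) - kk * (a * sinh (a * t)))) by ring.
  apply is_derive_scal, @is_derive_minus;
    [apply is_derive_sinh_scal | apply is_derive_scal, is_derive_cosh_scal].
Qed.

Lemma is_derive_sq (f : R -> R) x l :
  is_derive f x l -> is_derive (fun u => f u ^ 2) x (2 * f x * l).
Proof.
  intros H. apply (is_derive_ext_R (fun u => f u * f u)); [intros; simpl; ring|].
  replace (2 * f x * l) with (l * f x + f x * l) by ring.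
  apply (is_derive_mult f f); [exact H | exact H | exact Rmult_comm].
Qed.

Lemma is_derive_warp_sq_t a t kk :
  is_derive (fun u => warp a u kk ^ 2) t (2 * warp a t kk * warp_dt a t kk).
Proof. apply (is_derive_sq (fun u => warp a u kk)), is_derive_warp_t. Qed.

Lemma is_derive_warp_sq_tt a t kk :
  is_derive (fun u => 2 * warp a u kk * warp_dt a u kk) t
    (2 * (warp_dt a t kk ^ 2 + warp a t kk * (a * a * warp a t kk))).
Proof.
  apply (is_derive_ext_R (fun u => 2 * (warp a u kk * warp_dt a u kk))); [intros; ring|].
  replace (2 * (warp_dt a t kk ^ 2 + warp a t kk * (a * a * warp a t kk))) with
    (2 * (warp_dt a t kk * warp_dt a t kk + warp a t kk * (a * a * warp a t kk))) by ring.
  apply is_derive_scal, (is_derive_mult (fun u => warp a u kk) (fun u => warp_dt a u kk));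
    [apply is_derive_warp_t | apply is_derive_warp_dt_t | exact Rmult_comm].
Qed.

Lemma warp_dt_mul a t k1 k2 :
  warp_dt a t k1 * warp_dt a t k2 - a * a * warp a t k1 * warp a t k2 = a * a * (k1 * k2 - 1).
Proof.
  unfold warp, warp_dt. pose proof (cosh_sq_sub_sinh_sq (a * t)) as C.
  transitivity
    (a * a * (k1 * k2 - 1) * (cosh (a * t) * cosh (a * t) - sinh (a * t) * sinh (a * t)));
    [ring | rewrite C; ring].
Qed.

Lemma is_deriveV_geod_t a t g n : is_deriveV (fun u => geod a u g n) t (vscal a (geod_tan a t g n)).
Proof.
  intros p Hp. unfold geod, geod_tan.
  apply (is_derive_ext_R (fun u => p g * cosh (a * u) + p n * sinh (a * u))).
  { intros u. rewrite proj_vadd, !proj_vscal by exact Hp. ring. }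
  rewrite proj_vscal, proj_vadd, !proj_vscal by exact Hp.
  replace (a * (sinh (a * t) * p g + cosh (a * t) * p n))
    with (p g * (a * sinh (a * t)) + p n * (a * cosh (a * t))) by ring.
  apply @is_derive_plus; apply is_derive_scal;
    [apply is_derive_cosh_scal | apply is_derive_sinh_scal].
Qed.

Lemma is_deriveV_geod_tan_t a t g n :
  is_deriveV (fun u => geod_tan a u g n) t (vscal a (geod a t g n)).
Proof.
  intros p Hp. unfold geod, geod_tan.
  apply (is_derive_ext_R (fun u => p g * sinh (a * u) + p n * cosh (a * u))).
  { intros u. rewrite proj_vadd, !proj_vscal by exact Hp. ring. }
  rewrite proj_vscal, proj_vadd, !proj_vscal by exact Hp.
  replace (a * (cosh (a * t) * p g + sinh (a * t) * p n))
    with (p g * (a * cosh (a * t)) + p n * (a * sinh (a * t))) by ring.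
  apply @is_derive_plus; apply is_derive_scal;
    [apply is_derive_sinh_scal | apply is_derive_cosh_scal].
Qed.

(* the curvature of the parallel curve at distance [a t] of a curve of curvature [kk] *)
Definition parallel_curv (a t kk : R) : R := (kk * cosh (a * t) - sinh (a * t)) / warp a t kk.

Lemma is_derive_parallel_curv_t a t kk : warp a t kk <> 0 ->
  is_derive (fun u => parallel_curv a u kk) t (a * (parallel_curv a t kk ^ 2 - 1)).
Proof.
  intros HA. unfold parallel_curv.
  assert (Dn : is_derive (fun u => kk * cosh (a * u) - sinh (a * u)) t
                 (kk * (a * sinh (a * t)) - a * cosh (a * t)))
    by (apply @is_derive_minus;
        [apply is_derive_scal, is_derive_cosh_scal | apply is_derive_sinh_scal]).
  pose proof (is_derive_div _ _ t _ _ Dn (is_derive_warp_t a t kk) HA) as D.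
  replace (a * (((kk * cosh (a * t) - sinh (a * t)) / warp a t kk) ^ 2 - 1)) with
    (((kk * (a * sinh (a * t)) - a * cosh (a * t)) * warp a t kk -
       (kk * cosh (a * t) - sinh (a * t)) * warp_dt a t kk) / (warp a t kk ^ 2)).
  - exact D.
  - unfold warp_dt, warp in *. field. exact HA.
Qed.

Lemma parallel_curv_inj a t k1 k2 : warp a t k1 <> 0 -> warp a t k2 <> 0 ->
  parallel_curv a t k1 = parallel_curv a t k2 -> k1 = k2.
Proof.
  intros H1 H2 E. unfold parallel_curv in E.
  apply (f_equal (fun z => z * warp a t k1 * warp a t k2)) in E.
  field_simplify in E; auto. unfold warp in E.
  pose proof (cosh_sq_sub_sinh_sq (a * t)) as C.
  assert (H : (k1 - k2) * (cosh (a * t) * cosh (a * t) - sinh (a * t) * sinh (a * t)) = 0) by nra.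
  rewrite C in H. lra.
Qed.

Section FrenetCurve.

Variables (I : R -> Prop) (gam N : R -> V3) (k : R -> R) (r : R).
Hypotheses (HF : frenet_curve I gam N k) (Hr : I r).

Lemma frenet_open : open I.
Proof. exact (proj1 HF). Qed.

Lemma frenet_is_deriveV_gam : is_deriveV gam r (dV gam r).
Proof.
  destruct HF as (_ & Hg & _). intros p Hp. rewrite proj_dV by exact Hp.
  apply Derive_correct, (smoothV_proj _ _ _ Hg Hp r Hr 1%nat).
Qed.

Lemma frenet_is_deriveV_N : is_deriveV N r (vscal (- k r) (dV gam r)).
Proof.
  destruct HF as (_ & _ & HN & _ & H). destruct (H r Hr) as (_ & _ & _ & _ & _ & _ & <-).
  intros p Hp. rewrite proj_dV by exact Hp.
  apply Derive_correct, (smoothV_proj _ _ _ HN Hp r Hr 1%nat).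
Qed.

Lemma frenet_is_deriveV_dgam : is_deriveV (dV gam) r (vadd (gam r) (vscal (k r) (N r))).
Proof.
  destruct HF as (_ & Hg & _ & _ & H). destruct (H r Hr) as (_ & _ & _ & _ & _ & <- & _).
  intros p Hp.
  assert (E : forall u, p (dV gam u) = Derive (fun v => p (gam v)) u)
    by (intros; apply proj_dV, Hp).
  rewrite (proj_dV p (dV gam)), (Derive_ext _ _ r E) by exact Hp.
  apply (is_derive_ext_R (Derive (fun v => p (gam v)))); [intros u; symmetry; apply E|].
  apply Derive_correct, (smoothV_proj _ _ _ Hg Hp r Hr 2%nat).
Qed.

Lemma frenet_is_derive_k : is_derive k r (Derive k r).
Proof. destruct HF as (_ & _ & _ & Hk & _). apply Derive_correct, (Hk r Hr 1%nat). Qed.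

Lemma frenet_frame :
  lor (gam r) (gam r) = -1 /\ lor (dV gam r) (dV gam r) = 1 /\ lor (N r) (N r) = 1 /\
  lor (N r) (gam r) = 0 /\ lor (gam r) (N r) = 0 /\
  lor (N r) (dV gam r) = 0 /\ lor (dV gam r) (N r) = 0 /\
  lor (gam r) (dV gam r) = 0 /\ lor (dV gam r) (gam r) = 0.
Proof.
  destruct HF as (HI & _ & _ & _ & H).
  destruct (H r Hr) as ([Hgg _] & Hdd & HNN & HNg & HNd & _).
  (* [lor gam gam = -1] near [r], so its derivative [2 lor gam gam'] vanishes *)
  assert (Hgd : lor (gam r) (dV gam r) = 0).
  { assert (D : Derive (fun u => lor (gam u) (gam u)) r =
                 lor (dV gam r) (gam r) + lor (gam r) (dV gam r))
      by (apply is_derive_unique, is_derive_lor; apply frenet_is_deriveV_gam).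
    assert (D0 : Derive (fun u => lor (gam u) (gam u)) r = 0).
    { apply (Derive_loc_const _ _ (-1)). destruct (HI r Hr) as [eps Heps].
      exists eps. intros y Hy. exact (proj1 (proj1 (H y (Heps y Hy)))). }
    rewrite D, lor_sym in D0. lra. }
  repeat split; try assumption; rewrite lor_sym; assumption.
Qed.

Variables a t : R.

Lemma dV_geod_r :
  dV (fun u => geod a t (gam u) (N u)) r = vscal (warp a t (k r)) (dV gam r).
Proof.
  apply is_deriveV_dV. intros p Hp. unfold geod.
  apply (is_derive_ext_R (fun u => cosh (a * t) * p (gam u) + sinh (a * t) * p (N u))).
  { intros u. rewrite proj_vadd, !proj_vscal by exact Hp. ring. }
  replace (p (vscal (warp a t (k r)) (dV gam r))) with
    (cosh (a * t) * p (dV gam r) + sinh (a * t) * p (vscal (- k r) (dV gam r)))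
    by (unfold warp; rewrite !proj_vscal by exact Hp; ring).
  apply @is_derive_plus; apply is_derive_scal;
    [exact (frenet_is_deriveV_gam p Hp)
    | exact (frenet_is_deriveV_N p Hp)].
Qed.

Lemma is_derive_warp_r : is_derive (fun u => warp a t (k u)) r (- Derive k r * sinh (a * t)).
Proof.
  unfold warp.
  apply (is_derive_ext_R (fun u => cosh (a * t) - sinh (a * t) * k u)); [intros; ring|].
  replace (- Derive k r * sinh (a * t)) with (0 - sinh (a * t) * Derive k r) by ring.
  apply @is_derive_minus; [exact (is_derive_const _ _) | apply is_derive_scal, frenet_is_derive_k].
Qed.

Lemma dV_warp_dgam_r :
  dV (fun u => vscal (warp a t (k u)) (dV gam u)) r =
  vadd (vscal (- Derive k r * sinh (a * t)) (dV gam r))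
       (vscal (warp a t (k r)) (vadd (gam r) (vscal (k r) (N r)))).
Proof.
  apply is_deriveV_dV. intros p Hp.
  apply (is_derive_ext_R (fun u => warp a t (k u) * p (dV gam u))).
  { intros u. rewrite proj_vscal by exact Hp. reflexivity. }
  rewrite proj_vadd, !proj_vscal by exact Hp.
  apply (is_derive_mult (fun u => warp a t (k u)) (fun u => p (dV gam u)));
    [apply is_derive_warp_r | exact (frenet_is_deriveV_dgam p Hp)
    | exact Rmult_comm].
Qed.

End FrenetCurve.

Ltac rewrite_frame H :=
  let e1 := fresh in let e2 := fresh in let e3 := fresh in let e4 := fresh in
  let e5 := fresh in let e6 := fresh in let e7 := fresh in let e8 := fresh in
  let e9 := fresh in
  pose proof H as (e1 & e2 & e3 & e4 & e5 & e6 & e7 & e8 & e9);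
  rewrite ?e1, ?e2, ?e3, ?e4, ?e5, ?e6, ?e7, ?e8, ?e9; clear e1 e2 e3 e4 e5 e6 e7 e8 e9.

Lemma ball_V3 (x y : V3) e :
  ball x e y <-> Rabs (x1 y - x1 x) < e /\ Rabs (x2 y - x2 x) < e /\ Rabs (x3 y - x3 x) < e.
Proof.
  destruct x as [[x1' x2'] x3'], y as [[y1 y2] y3].
  change (ball (x1', x2', x3') e (y1, y2, y3))
    with ((ball x1' e y1 /\ ball x2' e y2) /\ ball x3' e y3).
  cbv [ball x1 x2 x3 fst snd]; simpl; unfold AbsRing_ball, abs, minus, plus, opp; simpl. tauto.
Qed.

Lemma locally_upd_open (U : V3 -> Prop) y i : open U -> U y ->
  locally (coord y i) (fun u => U (upd y i u)).
Proof.
  intros HU Hy. destruct (HU y Hy) as [eps He]. exists eps. intros u Hu.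
  apply He, ball_V3. pose proof (cond_pos eps).
  cbv [ball] in Hu; simpl in Hu; unfold AbsRing_ball, abs, minus, plus, opp in Hu; simpl in Hu.
  destruct y as [[t r] s]. destruct i as [|[|i]]; cbn in *;
    rewrite ?Rminus_diag, ?Rabs_R0; repeat split; assumption.
Qed.

Lemma locally_upd_x23 (I I2 : R -> Prop) y i : open I -> open I2 -> I (x2 y) -> I2 (x3 y) ->
  locally (coord y i) (fun u => I (x2 (upd y i u)) /\ I2 (x3 (upd y i u))).
Proof.
  intros HI HI2 Hr Hs. destruct y as [[t r] s].
  destruct i as [|[|i]]; simpl.
  - exists (mkposreal 1 Rlt_0_1). intros; split; assumption.
  - destruct (HI r Hr) as [eps He]. exists eps. intros u Hu. split; [apply He, Hu | exact Hs].
  - destruct (HI2 s Hs) as [eps He]. exists eps. intros u Hu. split; [exact Hr | apply He, Hu].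
Qed.

Lemma connected3_locally_const (U : V3 -> Prop) (phi : V3 -> R) :
  connected3 U ->
  (forall y, U y -> locally y (fun z => U z /\ phi z = phi y)) ->
  forall y z, U y -> U z -> phi z = phi y.
Proof.
  intros HC Hloc y z Hy Hz.
  destruct (Req_dec (phi z) (phi y)) as [E|NE]; [exact E|exfalso].
  set (v := phi y).
  assert (Hneq : forall w, U w -> phi w <> v -> locally w (fun q => U q /\ phi q <> v)).
  { intros w Hw Hw'. destruct (Hloc w Hw) as [eps He]. exists eps. intros q Hq.
    destruct (He q Hq) as [H1 ->]. split; assumption. }
  apply (HC (fun w => locally w (fun q => U q /\ phi q = v))
            (fun w => locally w (fun q => U q /\ phi q <> v))).
  - intros w Hw. apply locally_locally, Hw.
  - intros w Hw. apply locally_locally, Hw.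
  - intros w Hw. destruct (Req_dec (phi w) v) as [<-|NE2]; [left; apply Hloc, Hw | right; auto].
  - intros w _ HA HB. apply locally_singleton in HA. apply locally_singleton in HB.
    exact (proj2 HB (proj2 HA)).
  - exists y. split; [exact Hy | apply Hloc, Hy].
  - exists z. split; [exact Hz | apply Hneq; assumption].
Qed.

Lemma separated_vars_const (U : V3 -> Prop) (f g : R -> R) :
  open U -> connected3 U -> (exists x, U x) ->
  (forall y, U y -> f (x2 y) = g (x3 y)) ->
  exists c0, forall y, U y -> f (x2 y) = c0 /\ g (x3 y) = c0.
Proof.
  intros HU HC [x0 Hx0] Hfg.
  (* for [z] near [y], the point [(t_y, r_z, s_y)] still lies in [U] *)
  assert (Hloc : forall y, U y -> locally y (fun z => U z /\ f (x2 z) = f (x2 y))).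
  { intros y Hy. destruct (HU y Hy) as [eps He]. exists eps. intros z Hz.
    split; [apply He, Hz|].
    assert (Hw : U (upd y 1 (x2 z))).
    { apply He, ball_V3. apply ball_V3 in Hz. pose proof (cond_pos eps).
      destruct y as [[t r] s]. cbn in *.
      rewrite !Rminus_diag, Rabs_R0. tauto. }
    pose proof (Hfg _ Hw) as E. destruct y as [[t r] s]. cbn in E |- *.
    rewrite E. symmetry. exact (Hfg _ Hy). }
  exists (f (x2 x0)). intros y Hy.
  pose proof (connected3_locally_const U (fun w => f (x2 w)) HC Hloc x0 y Hx0 Hy) as E.
  split; [exact E | rewrite <- (Hfg y Hy); exact E].
Qed.

Lemma Derive_t_eq0_on (U : V3 -> Prop) (f : R -> R -> R -> R) y : open U -> U y ->
  (forall z, U z -> f (x1 z) (x2 z) (x3 z) = 0) -> Derive (fun u => f u (x2 y) (x3 y)) (x1 y) = 0.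
Proof.
  intros HU Hy Hf. apply (Derive_loc_const _ _ 0).
  destruct (locally_upd_open U y 0 HU Hy) as [eps He]. exists eps. intros u Hu.
  specialize (Hf _ (He u Hu)). destruct y as [[t r] s]. exact Hf.
Qed.

Lemma pd_t_only (U : V3 -> Prop) (f : V3 -> R) (h : R -> R) l y :
  open U -> (forall z, U z -> f z = h (x1 z)) -> U y ->
  pd l f y = match l with O => Derive h (x1 y) | _ => 0 end.
Proof.
  intros HU Hf Hy. unfold pd.
  rewrite (Derive_ext_loc _ (fun u => h (x1 (upd y l u)))).
  2:{ destruct (locally_upd_open U y l HU Hy) as [eps He].
      exists eps. intros u Hu. apply Hf, He, Hu. }
  destruct y as [[t r] s]. destruct l as [|l]; [reflexivity|].
  apply (Derive_loc_const _ _ (h t)). exists (mkposreal 1 Rlt_0_1). intros u _.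
  destruct l; reflexivity.
Qed.

Lemma pd_pd_t_only (U : V3 -> Prop) (f : V3 -> R) (h : R -> R) kk l y :
  open U -> (forall z, U z -> f z = h (x1 z)) -> U y ->
  pd kk (pd l f) y = match kk, l with O, O => Derive (Derive h) (x1 y) | _, _ => 0 end.
Proof.
  intros HU Hf Hy.
  rewrite (pd_t_only U (pd l f) (match l with O => Derive h | _ => fun _ => 0 end) kk y HU).
  - destruct kk, l; try reflexivity. apply Derive_const.
  - intros z Hz. rewrite (pd_t_only U f h l z HU Hf Hz). destruct l; reflexivity.
  - exact Hy.
Qed.

(* indices [>= 2] all denote the [s]-coordinate, as they do in [coord] and [upd] *)
Definition idx3 (i : nat) : nat := match i with O => O | 1%nat => 1%nat | _ => 2%nat end.

Definition diag3 (d0 d1 d2 : R) (i j : nat) : R :=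
  match idx3 i, idx3 j with
  | O, O => d0
  | 1%nat, 1%nat => d1
  | 2%nat, 2%nat => d2
  | _, _ => 0
  end.

Definition basis3 (i : nat) : nat -> R := fun j => if Nat.eqb j i then 1 else 0.

Definition offdiag3 (K01 K02 K12 : R) (i j : nat) : R :=
  match idx3 i, idx3 j with
  | O, 1%nat | 1%nat, O => K01
  | O, 2%nat | 2%nat, O => K02
  | 1%nat, 2%nat | 2%nat, 1%nat => K12
  | _, _ => 0
  end.

Lemma gm_sym F i j x : gm F i j x = gm F j i x.
Proof. unfold gm, ip6. rewrite (lor_sym (fst _)), (lor_sym (snd _)). reflexivity. Qed.

Lemma gX_basis3 F x i j : (i < 3)%nat -> (j < 3)%nat -> gX F x (basis3 i) (basis3 j) = gm F i j x.
Proof.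
  intros Hi Hj. unfold gX, sum3, basis3.
  destruct i as [|[|[|i]]]; try lia; destruct j as [|[|[|j]]]; try lia; cbn; ring.
Qed.

Lemma sec_basis3 F x i j : (i < 3)%nat -> (j < 3)%nat ->
  sec F x (basis3 i) (basis3 j) = Riem F i j i j x / (gm F i i x * gm F j j x - gm F i j x ^ 2).
Proof.
  intros Hi Hj. unfold sec. rewrite !gX_basis3 by assumption. f_equal. unfold sum3, basis3.
  destruct i as [|[|[|i]]]; try lia; destruct j as [|[|[|j]]]; try lia; cbn; ring.
Qed.

Lemma sec_space_form F x K0 X Y :
  (forall i k l m, Riem F i k l m x = K0 * (gm F i l x * gm F k m x - gm F i m x * gm F k l x)) ->
  gX F x X X * gX F x Y Y - gX F x X Y ^ 2 <> 0 -> sec F x X Y = K0.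
Proof.
  intros HR HD. unfold sec. unfold gX, sum3 in *. rewrite !HR.
  rewrite (gm_sym F 1 0), (gm_sym F 2 0), (gm_sym F 2 1) in *.
  field. exact HD.
Qed.

(* the curvature tensor of [dt^2 + f(t)^2 dr^2 + h(t)^2 ds^2] at a point where
   [f, f', f''] and [h, h', h''] take the values [f, f1, f2] and [h, h1, h2] *)
Lemma Riem_warped F x f f1 f2 h h1 h2 :
  (forall i m, gm F i m x = diag3 1 (f ^ 2) (h ^ 2) i m) ->
  (forall l i m, pd l (gm F i m) x =
     match l with O => diag3 0 (2 * f * f1) (2 * h * h1) i m | _ => 0 end) ->
  (forall kk l i m, pd kk (pd l (gm F i m)) x =
     match kk, l with
     | O, O => diag3 0 (2 * (f1 ^ 2 + f * f2)) (2 * (h1 ^ 2 + h * h2)) i m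
     | _, _ => 0
     end) ->
  f <> 0 -> h <> 0 ->
  forall i k l m, Riem F i k l m x =
    offdiag3 (- f2 / f) (- h2 / h) (- (f1 * h1) / (f * h)) i k *
    (gm F i l x * gm F k m x - gm F i m x * gm F k l x).
Proof.
  intros HG H1 H2 Hf Hh i k l m.
  unfold Riem, Gam1, ginv, detg, cof, sum3. rewrite !H2, !H1.
  cbn [Nat.add Nat.modulo Nat.divmod fst snd].
  rewrite !HG.
  destruct i as [|[|i]]; destruct k as [|[|k]]; destruct l as [|[|l]]; destruct m as [|[|m]];
    unfold offdiag3, diag3, idx3; simpl; field; auto.
Qed.

Lemma offdiag3_const K d0 d1 d2 i k l m :
  offdiag3 K K K i k *
    (diag3 d0 d1 d2 i l * diag3 d0 d1 d2 k m - diag3 d0 d1 d2 i m * diag3 d0 d1 d2 k l) =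
  K * (diag3 d0 d1 d2 i l * diag3 d0 d1 d2 k m - diag3 d0 d1 d2 i m * diag3 d0 d1 d2 k l).
Proof.
  destruct i as [|[|i]]; destruct k as [|[|k]]; destruct l as [|[|l]]; destruct m as [|[|m]];
    unfold offdiag3, diag3, idx3; simpl; ring.
Qed.

Lemma Derive_diag3_warp_sq a a0 b0 i m t :
  Derive (fun u => diag3 1 (warp a u a0 ^ 2) (warp a u b0 ^ 2) i m) t =
  diag3 0 (2 * warp a t a0 * warp_dt a t a0) (2 * warp a t b0 * warp_dt a t b0) i m.
Proof.
  unfold diag3. destruct (idx3 i) as [|[|[|]]]; destruct (idx3 m) as [|[|[|]]];
    try apply Derive_const; apply is_derive_unique, is_derive_warp_sq_t.
Qed.

Lemma Derive2_diag3_warp_sq a a0 b0 i m t :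
  Derive (Derive (fun u => diag3 1 (warp a u a0 ^ 2) (warp a u b0 ^ 2) i m)) t =
  diag3 0 (2 * (warp_dt a t a0 ^ 2 + warp a t a0 * (a * a * warp a t a0)))
          (2 * (warp_dt a t b0 ^ 2 + warp a t b0 * (a * a * warp a t b0))) i m.
Proof.
  rewrite (Derive_ext _ _ t (Derive_diag3_warp_sq a a0 b0 i m)).
  unfold diag3. destruct (idx3 i) as [|[|[|]]]; destruct (idx3 m) as [|[|[|]]];
    try apply Derive_const; apply is_derive_unique, is_derive_warp_sq_tt.
Qed.

Definition dMc c (gam N gam2 N2 : R -> V3) (k k2 : R -> R) (i : nat) (y : V3) : V6 :=
  let a := sqrt c in let b := sqrt (1 - c) in
  let t := x1 y in let r := x2 y in let s := x3 y in
  match i with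
  | O => (vscal a (geod_tan a t (gam r) (N r)), vscal b (geod_tan b t (gam2 s) (N2 s)))
  | 1%nat => (vscal (warp a t (k r)) (dV gam r), v0)
  | _ => (v0, vscal (warp b t (k2 s)) (dV gam2 s))
  end.

Definition dgm_Mc c (k k2 : R -> R) (l i m : nat) (y : V3) : R :=
  let a := sqrt c in let b := sqrt (1 - c) in
  let t := x1 y in let r := x2 y in let s := x3 y in
  match idx3 l with
  | O => diag3 0 (2 * warp a t (k r) * warp_dt a t (k r))
                 (2 * warp b t (k2 s) * warp_dt b t (k2 s)) i m
  | 1%nat => diag3 0 (2 * warp a t (k r) * (- Derive k r * sinh (a * t))) 0 i m
  | _ => diag3 0 0 (2 * warp b t (k2 s) * (- Derive k2 s * sinh (b * t))) i m
  end.

Definition xi_Mc c (gam N gam2 N2 : R -> V3) (y : V3) : V6 :=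
  (vscal (sqrt (1 - c)) (geod_tan (sqrt c) (x1 y) (gam (x2 y)) (N (x2 y))),
   vscal (- sqrt c) (geod_tan (sqrt (1 - c)) (x1 y) (gam2 (x3 y)) (N2 (x3 y)))).

Section Immersion.

Variables (c : R) (gam N gam2 N2 : R -> V3) (k k2 : R -> R) (I I2 : R -> Prop).
Hypotheses (Hc : 0 < c < 1) (HF1 : frenet_curve I gam N k) (HF2 : frenet_curve I2 gam2 N2 k2).

Local Notation F := (Mc c gam N gam2 N2).
Local Notation a := (sqrt c).
Local Notation b := (sqrt (1 - c)).
Local Notation A y := (warp a (x1 y) (k (x2 y))).
Local Notation B y := (warp b (x1 y) (k2 (x3 y))).

Lemma Mc_eq y :
  F y = (geod a (x1 y) (gam (x2 y)) (N (x2 y)), geod b (x1 y) (gam2 (x3 y)) (N2 (x3 y))).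
Proof. reflexivity. Qed.

Lemma pF_Mc i y : I (x2 y) -> I2 (x3 y) -> pF i F y = dMc c gam N gam2 N2 k k2 i y.
Proof.
  intros Hr Hs. destruct y as [[t r] s]. destruct i as [|[|i]].
  - change (pF 0 F (t, r, s)) with
      (dV (fun u => geod a u (gam r) (N r)) t, dV (fun u => geod b u (gam2 s) (N2 s)) t).
    rewrite !is_deriveV_dV with (L := vscal _ (geod_tan _ _ _ _)) by apply is_deriveV_geod_t.
    reflexivity.
  - change (pF 1 F (t, r, s)) with
      (dV (fun u => geod a t (gam u) (N u)) r, dV (fun _ => geod b t (gam2 s) (N2 s)) r).
    rewrite dV_const, (dV_geod_r I gam N k) by assumption. reflexivity.
  - change (pF (S (S i)) F (t, r, s)) with
      (dV (fun _ => geod a t (gam r) (N r)) s, dV (fun u => geod b t (gam2 u) (N2 u)) s).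
    rewrite dV_const, (dV_geod_r I2 gam2 N2 k2) by assumption. reflexivity.
Qed.

Lemma locally_upd_dom y i : I (x2 y) -> I2 (x3 y) ->
  locally (coord y i) (fun u => I (x2 (upd y i u)) /\ I2 (x3 (upd y i u))).
Proof. apply locally_upd_x23; eapply frenet_open; eassumption. Qed.

Lemma pF_pF_Mc i j y : I (x2 y) -> I2 (x3 y) ->
  pF i (pF j F) y = dP (fun u => dMc c gam N gam2 N2 k k2 j (upd y i u)) (coord y i).
Proof.
  intros Hr Hs. apply dP_ext_loc.
  destruct (locally_upd_dom y i Hr Hs) as [eps He].
  exists eps. intros u Hu. destruct (He u Hu). apply pF_Mc; assumption.
Qed.

Lemma pF_Mc_tt y : I (x2 y) -> I2 (x3 y) ->
  pF 0 (pF 0 F) y = (vscal a (vscal a (geod a (x1 y) (gam (x2 y)) (N (x2 y)))),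
                     vscal b (vscal b (geod b (x1 y) (gam2 (x3 y)) (N2 (x3 y))))).
Proof.
  intros Hr Hs. rewrite pF_pF_Mc by assumption. destruct y as [[t r] s].
  unfold dP; cbn. f_equal; apply is_deriveV_dV, is_deriveV_vscal, is_deriveV_geod_tan_t.
Qed.

Lemma pF_Mc_rr y : I (x2 y) -> I2 (x3 y) ->
  pF 1 (pF 1 F) y =
  (vadd (vscal (- Derive k (x2 y) * sinh (a * x1 y)) (dV gam (x2 y)))
        (vscal (A y) (vadd (gam (x2 y)) (vscal (k (x2 y)) (N (x2 y))))), v0).
Proof.
  intros Hr Hs. rewrite pF_pF_Mc by assumption. destruct y as [[t r] s].
  unfold dP; cbn. rewrite dV_const, (dV_warp_dgam_r I gam N k) by assumption. reflexivity.
Qed.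

Lemma pF_Mc_ss y : I (x2 y) -> I2 (x3 y) ->
  pF 2 (pF 2 F) y =
  (v0, vadd (vscal (- Derive k2 (x3 y) * sinh (b * x1 y)) (dV gam2 (x3 y)))
            (vscal (B y) (vadd (gam2 (x3 y)) (vscal (k2 (x3 y)) (N2 (x3 y)))))).
Proof.
  intros Hr Hs. rewrite pF_pF_Mc by assumption. destruct y as [[t r] s].
  unfold dP; cbn. rewrite dV_const, (dV_warp_dgam_r I2 gam2 N2 k2) by assumption. reflexivity.
Qed.

Lemma gm_Mc i m y : I (x2 y) -> I2 (x3 y) -> gm F i m y = diag3 1 (A y ^ 2) (B y ^ 2) i m.
Proof.
  intros Hr Hs. unfold gm. rewrite !pF_Mc by assumption.
  pose proof (frenet_frame _ _ _ _ _ HF1 Hr) as Fr1.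
  pose proof (frenet_frame _ _ _ _ _ HF2 Hs) as Fr2.
  pose proof (cosh_sq_sub_sinh_sq (a * x1 y)).
  pose proof (cosh_sq_sub_sinh_sq (b * x1 y)).
  pose proof (sqrt_sqrt c ltac:(lra)). pose proof (sqrt_sqrt (1 - c) ltac:(lra)).
  destruct i as [|[|i]]; destruct m as [|[|m]];
    unfold dMc, diag3, idx3, ip6, geod_tan; cbn; autorewrite with lor;
    rewrite_frame Fr1; rewrite_frame Fr2; nra.
Qed.

Lemma pd_gm_Mc l i m y : I (x2 y) -> I2 (x3 y) -> pd l (gm F i m) y = dgm_Mc c k k2 l i m y.
Proof.
  intros Hr Hs.
  transitivity (Derive (fun u => diag3 1 (A (upd y l u) ^ 2) (B (upd y l u) ^ 2) i m) (coord y l)).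
  { unfold pd. apply Derive_ext_loc.
    destruct (locally_upd_dom y l Hr Hs) as [eps He].
    exists eps. intros u Hu. destruct (He u Hu). apply gm_Mc; assumption. }
  destruct y as [[t r] s].
  destruct i as [|[|i]]; destruct m as [|[|m]]; destruct l as [|[|l]];
    unfold diag3, dgm_Mc, idx3; cbn; try apply Derive_const; apply is_derive_unique.
  - apply is_derive_warp_sq_t.
  - apply (is_derive_sq (fun u => warp a t (k u))), (is_derive_warp_r I gam N k); assumption.
  - apply is_derive_warp_sq_t.
  - apply (is_derive_sq (fun u => warp b t (k2 u))), (is_derive_warp_r I2 gam2 N2 k2); assumption.
Qed.

Lemma pd_pd_gm_Mc_tt i m y : I (x2 y) -> I2 (x3 y) ->
  pd 0 (pd 0 (gm F i m)) y =
  diag3 0 (2 * (warp_dt a (x1 y) (k (x2 y)) ^ 2 + A y * (c * A y)))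
          (2 * (warp_dt b (x1 y) (k2 (x3 y)) ^ 2 + B y * ((1 - c) * B y))) i m.
Proof.
  intros Hr Hs. unfold pd at 1.
  destruct y as [[t r] s]; cbn in Hr, Hs |- *.
  rewrite (Derive_ext _ (fun u => dgm_Mc c k k2 0 i m (u, r, s)))
    by (intros u; apply pd_gm_Mc; assumption).
  destruct i as [|[|i]]; destruct m as [|[|m]];
    unfold dgm_Mc, diag3, idx3; cbn [x1 x2 x3 fst snd]; try apply Derive_const;
    erewrite is_derive_unique by apply is_derive_warp_sq_tt; rewrite sqrt_sqrt by lra; reflexivity.
Qed.

Lemma pd_pd_gm_Mc_eq0 kk l i m y : I (x2 y) -> I2 (x3 y) ->
  (forall z, dgm_Mc c k k2 l i m z = 0) -> pd kk (pd l (gm F i m)) y = 0.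
Proof.
  intros Hr Hs H. unfold pd at 1. apply (Derive_loc_const _ _ 0).
  destruct (locally_upd_dom y kk Hr Hs) as [eps He].
  exists eps. intros u Hu. destruct (He u Hu). rewrite pd_gm_Mc by assumption. apply H.
Qed.

Lemma detg_Mc y : I (x2 y) -> I2 (x3 y) -> detg F y = A y ^ 2 * B y ^ 2.
Proof.
  intros Hr Hs. unfold detg, cof, sum3; cbn.
  rewrite !gm_Mc by assumption. unfold diag3; simpl. ring.
Qed.

Lemma warp_Mc_neq0 y : I (x2 y) -> I2 (x3 y) -> 0 < detg F y -> A y <> 0 /\ B y <> 0.
Proof.
  intros Hr Hs Hd. rewrite detg_Mc in Hd by assumption.
  split; intros E; rewrite E in Hd; lra.
Qed.

Lemma mean_curv_Mc_diag y xi : I (x2 y) -> I2 (x3 y) -> A y <> 0 -> B y <> 0 ->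
  mean_curv F xi y = sff F xi 0 0 y + sff F xi 1 1 y / A y ^ 2 + sff F xi 2 2 y / B y ^ 2.
Proof.
  intros Hr Hs HA HB. unfold mean_curv, ginv.
  rewrite detg_Mc by assumption. unfold cof, sum3; cbn.
  rewrite !gm_Mc by assumption. unfold diag3; simpl. field. auto.
Qed.

Lemma unit_normal_Mc y xi : I (x2 y) -> I2 (x3 y) -> unit_normal F y xi ->
  cosh (a * x1 y) * lor (fst xi) (gam (x2 y)) + sinh (a * x1 y) * lor (fst xi) (N (x2 y)) = 0 /\
  cosh (b * x1 y) * lor (snd xi) (gam2 (x3 y)) + sinh (b * x1 y) * lor (snd xi) (N2 (x3 y)) = 0 /\
  a * (sinh (a * x1 y) * lor (fst xi) (gam (x2 y)) + cosh (a * x1 y) * lor (fst xi) (N (x2 y))) +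
  b * (sinh (b * x1 y) * lor (snd xi) (gam2 (x3 y)) + cosh (b * x1 y) * lor (snd xi) (N2 (x3 y)))
    = 0 /\
  A y * lor (fst xi) (dV gam (x2 y)) = 0 /\ B y * lor (snd xi) (dV gam2 (x3 y)) = 0.
Proof.
  intros Hr Hs (_ & Hn1 & Hn2 & Hn).
  pose proof (Hn 0%nat ltac:(lia)) as H0.
  pose proof (Hn 1%nat ltac:(lia)) as H1.
  pose proof (Hn 2%nat ltac:(lia)) as H2.
  rewrite pF_Mc in H0, H1, H2 by assumption.
  rewrite Mc_eq in Hn1, Hn2. unfold dMc, ip6, geod_tan, geod in *. cbn in *.
  autorewrite with lor in *. repeat split; lra.
Qed.

Lemma mean_curv_Mc y xi : I (x2 y) -> I2 (x3 y) -> A y <> 0 -> B y <> 0 ->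
  unit_normal F y xi ->
  mean_curv F xi y =
  (lor (fst xi) (gam (x2 y)) + k (x2 y) * lor (fst xi) (N (x2 y))) / A y
  + (lor (snd xi) (gam2 (x3 y)) + k2 (x3 y) * lor (snd xi) (N2 (x3 y))) / B y.
Proof.
  intros Hr Hs HA HB Hn.
  destruct (unit_normal_Mc y xi Hr Hs Hn) as (E1 & E2 & _ & E4 & E5).
  apply Rmult_integral in E4 as [E4|E4]; [contradiction|].
  apply Rmult_integral in E5 as [E5|E5]; [contradiction|].
  rewrite mean_curv_Mc_diag by assumption. unfold sff.
  rewrite pF_Mc_tt, pF_Mc_rr, pF_Mc_ss by assumption.
  unfold ip6, geod; cbn [fst snd].
  rewrite !(lor_sym _ (fst xi)), !(lor_sym _ (snd xi)). autorewrite with lor.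
  rewrite E4, E5.
  replace (cosh (a * x1 y) * lor (fst xi) (gam (x2 y)) + sinh (a * x1 y) * lor (fst xi) (N (x2 y)))
    with 0 by lra.
  replace (cosh (b * x1 y) * lor (snd xi) (gam2 (x3 y)) + sinh (b * x1 y) * lor (snd xi) (N2 (x3 y)))
    with 0 by lra.
  field. auto.
Qed.

Lemma sqrt_one_sub_half : c = 1 / 2 -> b = a.
Proof. intros ->. f_equal. field. Qed.

Lemma minimal_Mc_of_const y xi k0 : c = 1 / 2 -> I (x2 y) -> I2 (x3 y) -> 0 < detg F y ->
  k (x2 y) = k0 -> k2 (x3 y) = k0 -> unit_normal F y xi -> mean_curv F xi y = 0.
Proof.
  intros Hhalf Hr Hs Hd Hk1 Hk2 Hn.
  destruct (warp_Mc_neq0 y Hr Hs Hd) as [HA HB].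
  destruct (unit_normal_Mc y xi Hr Hs Hn) as (E1 & E2 & E3 & _).
  rewrite mean_curv_Mc by assumption.
  rewrite (sqrt_one_sub_half Hhalf), Hk1, Hk2 in *.
  assert (Ha : 0 < a) by (apply sqrt_lt_R0; lra).
  pose proof (cosh_sq_sub_sinh_sq (a * x1 y)) as CS.
  set (C := cosh (a * x1 y)) in *. set (S := sinh (a * x1 y)) in *.
  set (al := lor (fst xi) (gam (x2 y))) in *. set (be := lor (fst xi) (N (x2 y))) in *.
  set (al2 := lor (snd xi) (gam2 (x3 y))) in *. set (be2 := lor (snd xi) (N2 (x3 y))) in *.
  (* the normal conditions put [(al + al2, be + be2)] in the kernel of [[C, S], [S, C]],
     whose determinant is [C^2 - S^2 = 1] *)
  assert (E3' : S * (al + al2) + C * (be + be2) = 0).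
  { apply Rmult_eq_reg_l with a; lra. }
  assert (X : al + al2 = 0).
  { transitivity ((C * C - S * S) * (al + al2)); [rewrite CS; ring|].
    transitivity (C * (C * al + S * be) + C * (C * al2 + S * be2)
                  - S * (S * (al + al2) + C * (be + be2))); [ring|].
    rewrite E1, E2, E3'. ring. }
  assert (Y : be + be2 = 0).
  { transitivity ((C * C - S * S) * (be + be2)); [rewrite CS; ring|].
    transitivity (C * (S * (al + al2) + C * (be + be2))
                  - S * (C * al + S * be) - S * (C * al2 + S * be2)); [ring|].
    rewrite E1, E2, E3'. ring. }
  replace al2 with (- al) by lra. replace be2 with (- be) by lra.
  field. exact HA.
Qed.

Lemma xi_Mc_unit_normal y : I (x2 y) -> I2 (x3 y) -> unit_normal F y (xi_Mc c gam N gam2 N2 y).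
Proof.
  intros Hr Hs.
  pose proof (frenet_frame _ _ _ _ _ HF1 Hr) as Fr1.
  pose proof (frenet_frame _ _ _ _ _ HF2 Hs) as Fr2.
  pose proof (cosh_sq_sub_sinh_sq (a * x1 y)).
  pose proof (cosh_sq_sub_sinh_sq (b * x1 y)).
  pose proof (sqrt_sqrt c ltac:(lra)). pose proof (sqrt_sqrt (1 - c) ltac:(lra)).
  repeat split.
  - unfold xi_Mc, ip6, geod_tan; cbn. autorewrite with lor. rewrite_frame Fr1. rewrite_frame Fr2.
    nra.
  - rewrite Mc_eq. unfold xi_Mc, geod_tan, geod; cbn. autorewrite with lor. rewrite_frame Fr1.
    ring.
  - rewrite Mc_eq. unfold xi_Mc, geod_tan, geod; cbn. autorewrite with lor. rewrite_frame Fr2.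
    ring.
  - intros i Hi. rewrite pF_Mc by assumption.
    destruct i as [|[|[|i]]]; [| | |lia];
      unfold xi_Mc, dMc, ip6, geod_tan; cbn; autorewrite with lor;
      rewrite_frame Fr1; rewrite_frame Fr2; ring_simplify; rewrite ?cosh_sq; ring.
Qed.

Lemma mean_curv_xi_Mc y : I (x2 y) -> I2 (x3 y) -> A y <> 0 -> B y <> 0 ->
  mean_curv F (xi_Mc c gam N gam2 N2 y) y =
  b * parallel_curv a (x1 y) (k (x2 y)) - a * parallel_curv b (x1 y) (k2 (x3 y)).
Proof.
  intros Hr Hs HA HB.
  rewrite mean_curv_Mc by (try apply xi_Mc_unit_normal; assumption).
  pose proof (frenet_frame _ _ _ _ _ HF1 Hr) as Fr1.
  pose proof (frenet_frame _ _ _ _ _ HF2 Hs) as Fr2.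
  unfold xi_Mc, geod_tan, parallel_curv; cbn. autorewrite with lor.
  rewrite_frame Fr1. rewrite_frame Fr2. field. auto.
Qed.

Variable U : V3 -> Prop.
Hypotheses (HU : open U) (HUdom : forall x, U x -> I (coord x 1) /\ I2 (coord x 2))
  (Hdet : forall x, U x -> 0 < detg F x).

Lemma warp_Mc_neq0_on y : U y -> A y <> 0 /\ B y <> 0.
Proof. intros Hy. destruct (HUdom y Hy). apply warp_Mc_neq0; auto. Qed.

Section Minimal.

Hypothesis Hmin : minimal_on F U.

Lemma minimal_parallel_curv y : U y ->
  b * parallel_curv a (x1 y) (k (x2 y)) - a * parallel_curv b (x1 y) (k2 (x3 y)) = 0.
Proof.
  intros Hy. destruct (HUdom y Hy). destruct (warp_Mc_neq0_on y Hy).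
  rewrite <- mean_curv_xi_Mc by assumption.
  apply Hmin; [exact Hy | apply xi_Mc_unit_normal; assumption].
Qed.

Lemma minimal_parallel_curv_sq y : U y ->
  parallel_curv a (x1 y) (k (x2 y)) ^ 2 = parallel_curv b (x1 y) (k2 (x3 y)) ^ 2.
Proof.
  intros Hy. destruct (warp_Mc_neq0_on y Hy) as [HA HB].
  assert (Ha : 0 < a) by (apply sqrt_lt_R0; lra).
  assert (Hb : 0 < b) by (apply sqrt_lt_R0; lra).
  pose proof (Derive_t_eq0_on U
    (fun t r s => b * parallel_curv a t (k r) - a * parallel_curv b t (k2 s)) y HU Hy
    minimal_parallel_curv) as D0.
  (* the Riccati equation turns the [t]-derivative of the mean curvature into
     [a b (f_a^2 - f_b^2)] *)
  assert (D : Derive (fun u => b * parallel_curv a u (k (x2 y)) - a * parallel_curv b u (k2 (x3 y)))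
                (x1 y) = b * (a * (parallel_curv a (x1 y) (k (x2 y)) ^ 2 - 1)) -
                         a * (b * (parallel_curv b (x1 y) (k2 (x3 y)) ^ 2 - 1))).
  { apply is_derive_unique, @is_derive_minus;
      apply is_derive_scal, is_derive_parallel_curv_t; assumption. }
  cbv beta in D0. rewrite D in D0.
  apply Rmult_eq_reg_l with (a * b); [lra | nra].
Qed.

Lemma minimal_sqrt_eq : (exists x, U x) -> b = a.
Proof.
  intros [x0 Hx0].
  destruct (Req_dec b a) as [E|NE]; [exact E|exfalso].
  assert (Ha : 0 < a) by (apply sqrt_lt_R0; lra).
  (* if [b <> a], then [f_a] vanishes on [U], contradicting [f_a' = a (f_a^2 - 1)] *)
  assert (H0 : forall y, U y -> parallel_curv a (x1 y) (k (x2 y)) = 0).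
  { intros y Hy. pose proof (minimal_parallel_curv y Hy) as E1.
    pose proof (minimal_parallel_curv_sq y Hy) as E2.
    set (P := parallel_curv a (x1 y) (k (x2 y))) in *.
    set (Q := parallel_curv b (x1 y) (k2 (x3 y))) in *.
    assert (E3 : (b * b - a * a) * P ^ 2 = 0).
    { transitivity ((b * P - a * Q) * (b * P + a * Q) + a * a * (Q ^ 2 - P ^ 2)); [ring|].
      rewrite E1, E2. ring. }
    assert (NZ : b * b - a * a <> 0).
    { intros Z. apply NE. pose proof (sqrt_pos (1 - c)). nra. }
    apply Rmult_integral in E3 as [E3|E3]; [contradiction|].
    destruct (Req_dec P 0) as [? | NP]; [assumption | exfalso; exact (pow_nonzero P 2 NP E3)]. }
  destruct (warp_Mc_neq0_on x0 Hx0) as [HA _].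
  pose proof (Derive_t_eq0_on U (fun t r s => parallel_curv a t (k r)) x0 HU Hx0 H0) as D0.
  assert (D : Derive (fun u => parallel_curv a u (k (x2 x0))) (x1 x0) =
               a * (parallel_curv a (x1 x0) (k (x2 x0)) ^ 2 - 1))
    by (apply is_derive_unique, is_derive_parallel_curv_t, HA).
  cbv beta in D0. rewrite D, (H0 x0 Hx0) in D0.
  lra.
Qed.

End Minimal.

Lemma minimal_Mc_iff : connected3 U -> (exists x, U x) ->
  (minimal_on F U <->
     c = 1 / 2 /\ exists k0, forall x, U x -> k (coord x 1) = k0 /\ k2 (coord x 2) = k0).
Proof.
  intros HC Hne. split.
  - intros Hmin.
    pose proof (minimal_sqrt_eq Hmin Hne) as Hab.
    assert (Hhalf : c = 1 / 2).
    { pose proof (sqrt_sqrt c ltac:(lra)). pose proof (sqrt_sqrt (1 - c) ltac:(lra)).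
      rewrite Hab in *. lra. }
    split; [exact Hhalf|].
    apply separated_vars_const; auto.
    intros y Hy. destruct (warp_Mc_neq0_on y Hy) as [HA HB]. rewrite Hab in HB.
    apply (parallel_curv_inj a (x1 y)); auto.
    pose proof (minimal_parallel_curv Hmin y Hy) as E. rewrite Hab in E.
    assert (Ha : 0 < a) by (apply sqrt_lt_R0; lra).
    apply Rmult_eq_reg_l with a; lra.
  - intros [Hhalf [k0 Hk]] x Hx xi Hxi. destruct (HUdom x Hx), (Hk x Hx).
    apply (minimal_Mc_of_const x xi k0); auto.
Qed.

Ltac compute_Riem_Mc :=
  unfold Riem; rewrite ?pd_pd_gm_Mc_tt by assumption;
  repeat (rewrite pd_pd_gm_Mc_eq0 by (assumption || (intros; reflexivity)));
  unfold Gam1, ginv, sum3; rewrite !pd_gm_Mc, detg_Mc by assumption;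
  unfold cof; cbn [Nat.add Nat.modulo Nat.divmod fst snd]; rewrite !gm_Mc by assumption;
  unfold dgm_Mc, diag3, idx3; cbv zeta; simpl.

Lemma Riem_Mc_trtr y : I (x2 y) -> I2 (x3 y) -> A y <> 0 -> B y <> 0 ->
  Riem F 0 1 0 1 y = - c * A y ^ 2.
Proof. intros. compute_Riem_Mc. field. auto. Qed.

Lemma Riem_Mc_tsts y : I (x2 y) -> I2 (x3 y) -> A y <> 0 -> B y <> 0 ->
  Riem F 0 2 0 2 y = - (1 - c) * B y ^ 2.
Proof. intros. compute_Riem_Mc. field. auto. Qed.

Lemma Riem_Mc_rsrs y : I (x2 y) -> I2 (x3 y) -> A y <> 0 -> B y <> 0 ->
  Riem F 1 2 1 2 y = - (A y * warp_dt a (x1 y) (k (x2 y)) * B y * warp_dt b (x1 y) (k2 (x3 y))).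
Proof. intros. compute_Riem_Mc. field. auto. Qed.

Lemma const_sec_Mc_values K0 y : has_sec_curv F U K0 -> U y ->
  K0 = - c /\ K0 = - (1 - c) /\
  K0 = - (warp_dt a (x1 y) (k (x2 y)) * warp_dt b (x1 y) (k2 (x3 y))) / (A y * B y).
Proof.
  intros HK Hy. destruct (HUdom y Hy) as [Hr Hs]. destruct (warp_Mc_neq0_on y Hy) as [HA HB].
  assert (Hsec : forall i j, (i < 3)%nat -> (j < 3)%nat ->
                   gm F i i y * gm F j j y - gm F i j y ^ 2 <> 0 ->
                   K0 = Riem F i j i j y / (gm F i i y * gm F j j y - gm F i j y ^ 2)).
  { intros i j Hi Hj Hnd. rewrite <- sec_basis3 by assumption.
    symmetry. apply HK; [exact Hy|]. rewrite !gX_basis3 by assumption. exact Hnd. }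
  assert (G01 : gm F 0 0 y * gm F 1 1 y - gm F 0 1 y ^ 2 = A y ^ 2)
    by (rewrite !gm_Mc by assumption; unfold diag3; simpl; ring).
  assert (G02 : gm F 0 0 y * gm F 2 2 y - gm F 0 2 y ^ 2 = B y ^ 2)
    by (rewrite !gm_Mc by assumption; unfold diag3; simpl; ring).
  assert (G12 : gm F 1 1 y * gm F 2 2 y - gm F 1 2 y ^ 2 = A y ^ 2 * B y ^ 2)
    by (rewrite !gm_Mc by assumption; unfold diag3; simpl; ring).
  pose proof (pow_nonzero _ 2 HA). pose proof (pow_nonzero _ 2 HB).
  repeat split.
  - rewrite (Hsec 0%nat 1%nat), G01, Riem_Mc_trtr
      by first [lia | assumption | rewrite G01; auto].
    field. auto.
  - rewrite (Hsec 0%nat 2%nat), G02, Riem_Mc_tsts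
      by first [lia | assumption | rewrite G02; auto].
    field. auto.
  - rewrite (Hsec 1%nat 2%nat), G12, Riem_Mc_rsrs
      by first [lia | assumption | rewrite G12; apply Rmult_integral_contrapositive; auto].
    field. auto.
Qed.

Lemma sec_Mc_of_const a0 b0 : c = 1 / 2 -> a0 * b0 = 1 ->
  (forall x, U x -> k (coord x 1) = a0 /\ k2 (coord x 2) = b0) -> has_sec_curv F U (- 1 / 2).
Proof.
  intros Hhalf Hab0 Hk x Hx X Y HD.
  assert (Hk' : forall z, U z -> k (x2 z) = a0 /\ k2 (x3 z) = b0) by exact Hk.
  pose proof (sqrt_one_sub_half Hhalf) as Hb.
  assert (Ha2 : a * a = 1 / 2) by (rewrite sqrt_sqrt; lra).
  assert (HG : forall i m z, U z ->
                 gm F i m z = diag3 1 (warp a (x1 z) a0 ^ 2) (warp a (x1 z) b0 ^ 2) i m).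
  { intros i m z Hz. destruct (HUdom z Hz), (Hk' z Hz) as [E1 E2].
    rewrite gm_Mc, Hb, E1, E2 by assumption. reflexivity. }
  destruct (warp_Mc_neq0_on x Hx) as [HA HB]. destruct (Hk' x Hx) as [E1 E2].
  rewrite E1 in HA. rewrite E2, Hb in HB.
  set (t := x1 x) in *.
  apply sec_space_form; [|exact HD].
  intros i k' l m.
  rewrite (Riem_warped F x (warp a t a0) (warp_dt a t a0) (a * a * warp a t a0)
                           (warp a t b0) (warp_dt a t b0) (a * a * warp a t b0)); try assumption.
  - (* all three coordinate planes have curvature [-a^2 = -1/2] *)
    assert (H12 : warp_dt a t a0 * warp_dt a t b0 = warp a t a0 * warp a t b0 / 2).
    { pose proof (warp_dt_mul a t a0 b0) as Hdt. rewrite Ha2, Hab0 in Hdt. lra. }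
    replace (- (a * a * warp a t a0) / warp a t a0) with (- 1 / 2) by (rewrite Ha2; field; auto).
    replace (- (a * a * warp a t b0) / warp a t b0) with (- 1 / 2) by (rewrite Ha2; field; auto).
    replace (- (warp_dt a t a0 * warp_dt a t b0) / (warp a t a0 * warp a t b0)) with (- 1 / 2)
      by (rewrite H12; field; auto).
    rewrite !HG by exact Hx. apply offdiag3_const.
  - intros. apply HG, Hx.
  - intros l' i' m'.
    rewrite (pd_t_only U _ (fun u => diag3 1 (warp a u a0 ^ 2) (warp a u b0 ^ 2) i' m')
               l' x HU (HG i' m') Hx).
    destruct l'; [apply Derive_diag3_warp_sq | reflexivity].
  - intros kk l' i' m'.
    rewrite (pd_pd_t_only U _ (fun u => diag3 1 (warp a u a0 ^ 2) (warp a u b0 ^ 2) i' m')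
               kk l' x HU (HG i' m') Hx).
    destruct kk, l'; try reflexivity. apply Derive2_diag3_warp_sq.
Qed.

Lemma const_sec_Mc_half K0 y : has_sec_curv F U K0 -> U y -> c = 1 / 2.
Proof. intros HK Hy. destruct (const_sec_Mc_values K0 y HK Hy) as (? & ? & _). lra. Qed.

Lemma const_sec_Mc_curv_prod K0 y : has_sec_curv F U K0 -> U y -> k (x2 y) * k2 (x3 y) = 1.
Proof.
  intros HK Hy. pose proof (const_sec_Mc_half K0 y HK Hy) as Hhalf.
  destruct (warp_Mc_neq0_on y Hy) as [HA HB].
  destruct (const_sec_Mc_values K0 y HK Hy) as (E1 & _ & E3).
  rewrite (sqrt_one_sub_half Hhalf) in HB, E3. rewrite E1 in E3.
  assert (Ha2 : a * a = 1 / 2) by (rewrite sqrt_sqrt; lra).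
  pose proof (warp_dt_mul a (x1 y) (k (x2 y)) (k2 (x3 y))) as Hdt.
  set (f := warp a (x1 y) (k (x2 y))) in *. set (h := warp a (x1 y) (k2 (x3 y))) in *.
  set (f1 := warp_dt a (x1 y) (k (x2 y))) in *. set (h1 := warp_dt a (x1 y) (k2 (x3 y))) in *.
  assert (H12 : f1 * h1 = c * (f * h)).
  { transitivity (- (- c) * (f * h)); [|ring]. rewrite E3. field. auto. }
  rewrite H12, Ha2, Hhalf in Hdt. lra.
Qed.

Lemma const_sec_Mc_iff : connected3 U -> (exists x, U x) ->
  (const_sec F U <->
     c = 1 / 2 /\ exists a0 b0, a0 * b0 = 1 /\
       forall x, U x -> k (coord x 1) = a0 /\ k2 (coord x 2) = b0).
Proof.
  intros HC [x0 Hx0]. split.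
  - intros [K0 HK]. split; [exact (const_sec_Mc_half K0 x0 HK Hx0)|].
    pose proof (const_sec_Mc_curv_prod K0) as Hkk.
    destruct (separated_vars_const U k (fun s => / k2 s) HU HC (ex_intro _ x0 Hx0)) as [a0 Ha0].
    { intros y Hy. specialize (Hkk y HK Hy).
      assert (k2 (x3 y) <> 0) by (intros Z; rewrite Z in Hkk; lra).
      field_simplify_eq; auto. }
    exists a0, (/ a0). split.
    + destruct (Ha0 x0 Hx0) as [<- _]. specialize (Hkk x0 HK Hx0).
      field. intros Z. rewrite Z in Hkk. lra.
    + intros y Hy. destruct (Ha0 y Hy) as [E1 E2]. split; [exact E1|].
      cbn. rewrite <- E2, Rinv_inv. reflexivity.
  - intros [Hhalf [a0 [b0 [Hab0 Hk]]]]. exists (- 1 / 2).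
    exact (sec_Mc_of_const a0 b0 Hhalf Hab0 Hk).
Qed.

End Immersion.

Theorem lemma3p5 (c : R) (gam N gam2 N2 : R -> V3) (k k2 : R -> R)
  (I I2 : R -> Prop) (U : V3 -> Prop) :
  0 < c < 1 ->
  frenet_curve I gam N k -> frenet_curve I2 gam2 N2 k2 ->
  open U -> connected3 U -> (exists x, U x) ->
  (forall x, U x -> I (coord x 1) /\ I2 (coord x 2)) ->
  (forall x, U x -> 0 < detg (Mc c gam N gam2 N2) x) ->
  ((minimal_on (Mc c gam N gam2 N2) U <->
      c = 1 / 2 /\ exists k0, forall x, U x ->
        k (coord x 1) = k0 /\ k2 (coord x 2) = k0) /\
   (const_sec (Mc c gam N gam2 N2) U <->
      c = 1 / 2 /\ exists a b, a * b = 1 /\ forall x, U x ->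
        k (coord x 1) = a /\ k2 (coord x 2) = b) /\
   ((c = 1 / 2 /\ exists a b, a * b = 1 /\ forall x, U x ->
        k (coord x 1) = a /\ k2 (coord x 2) = b) ->
      has_sec_curv (Mc c gam N gam2 N2) U (- 1 / 2))).
Proof.
  intros Hc HF1 HF2 HU HC Hne Hdom Hdet.
  split; [|split].
  - apply (minimal_Mc_iff c gam N gam2 N2 k k2 I I2); assumption.
  - apply (const_sec_Mc_iff c gam N gam2 N2 k k2 I I2); assumption.
  - intros [Hhalf [a0 [b0 [Hab0 Hk]]]]. eapply sec_Mc_of_const; eassumption.
Qed.
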